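(* In the setting of the context, suppose $G_{xy}^{[1]}=1$ and $G_x\cong D_{20}$. Then $G_e\cong D_8$.
   Context: $\mathcal{A}=(G_x,G_e,G_{xy})$ is a finite, primitive amalgam of degree $(5,2)$ (no nontrivial subgroup of $G_{xy}$ normal in both $G_x$ and $G_e$; $|G_x:G_{xy}|=5$, $|G_e:G_{xy}|=2$), $G=G_x*_{G_{xy}}G_e$ acts on the coset graph (5-valent tree) $\Gamma$, $x$ is the vertex with stabiliser $G_x$, $y$ the neighbour with $G_e$ the setwise stabiliser of $\{x,y\}$ and $G_x\cap G_y=G_{xy}$. $G_z^{[1]}$ is the pointwise stabiliser of $z$ and its neighbours, $G_{xy}^{[1]}=G_x^{[1]}\cap G_y^{[1]}$. $D_{2n}$ denotes the dihedral group of order $2n$. *)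

From mathcomp Require Import all_boot all_fingroup all_solvable.
Set Implicit Arguments. Unset Strict Implicit. Unset Printing Implicit Defensive.
Local Open Scope group_scope.

(* An amalgam (G_x, G_e, G_xy) realised inside an ambient finite group gT:
   G_xy = G_x :&: G_e. *)
Definition amalgam (gT : finGroupType) (Gx Ge Gxy : {set gT}) : Prop :=
  Gx :&: Ge = Gxy.

Definition primitive_amalgam (gT : finGroupType) (Gx Ge Gxy : {set gT}) : Prop :=
  forall H : {group gT}, H \subset Gxy -> H <| Gx -> H <| Ge -> H :=: 1.

(* G_x^[1]: kernel of the action of G_x on the neighbours of x,
   i.e. on the cosets G_x/G_xy; this is the core of G_xy in G_x. *)
Definition vstab1 (gT : finGroupType) (Gx Gxy : {set gT}) : {set gT} :=
  gcore Gxy Gx.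

(* G_y = G_x^t for t in G_e \ G_xy; G_y^[1] = (G_x^[1])^t.
   G_xy^[1] = G_x^[1] :&: G_y^[1]. *)
Definition estab1 (gT : finGroupType) (Gx Ge Gxy : {set gT}) : {set gT} :=
  vstab1 Gx Gxy :&: (vstab1 Gx Gxy :^ repr (Ge :\: Gxy)).

From mathcomp Require Import all_boot all_fingroup all_solvable.
From mathcomp Require Import zify.
Local Open Scope group_scope.

(* Put V := G_xy, E := G_e.  Since |G_x| = 20 and
   |G_x : V| = 5, V is a Sylow 2-subgroup of G_x of order 4 (hence abelian),
   and |E| = 8 with |E : V| = 2.
   1. A dihedral group of order 4n has a central involution z; for G_x it
      spans a normal 2-subgroup, which therefore lies in the Sylow
      2-subgroup V.
   2. In E, the abelian subgroup V is maximal, so the centraliser of z in E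
      is either V or E.  The latter would make <z> normal in both G_x and
      G_e, contradicting primitivity; hence C_E(z) = V.
   3. For t in E \ V, the centraliser C_V(t) has order at most 2; a short
      computation then shows that t or t * z is an involution u outside V.
   4. The involutions u and z do not commute, so they generate a
      nonabelian dihedral subgroup of E; being nonabelian inside a group of
      order 8 it is all of E, whence E is isomorphic to D_8. *)

(* A dihedral group of order 4n has a central involution: writing it as
   <x, y> with x ^+ 2n = y ^+ 2 = 1 and x ^ y = x^-1, the order count forces
   #[x] = 2n, and x ^+ n is inverted, hence fixed, by y. *)
Lemma dihedral_central_involution {gT : finGroupType} {G : {group gT}} {n : nat} :
  0 < n -> G \isog 'D_(n.*2.*2) -> exists2 z, z \in 'Z(G) & #[z] = 2.
Proof.
move=> n_gt0 isoG; have n2_gt1 : 1 < n.*2 by rewrite -muln2; lia.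
have : G \homg 'D_(n.*2.*2) by apply: isog_hom.
rewrite Grp_dihedral //; case/existsP=> -[x y] /= /eqP[defG x2n y2 xy].
have ox : #[x] = n.*2.
  have le_x : #[x] <= n.*2 by rewrite dvdn_leq ?order_dvdn ?x2n // ltnW.
  have le_y : #[y] <= 2 by rewrite dvdn_leq ?order_dvdn ?y2.
  have := mul_cardG <[x]> <[y]>.
  rewrite -norm_joinEr ?norms_cycle ?xy ?groupV ?cycle_id // defG -!orderE.
  rewrite (card_isog isoG) card_dihedral //.
  have : 0 < #|<[x]>%G :&: <[y]>%G| := cardG_gt0 _.
  have : #[x] * #[y] <= #[x] * 2 by rewrite leq_mul2l le_y orbT.
  move: le_x; rewrite -!muln2; nia.
exists (x ^+ n); last by rewrite orderXdiv ox -muln2 ?mulKn ?dvdn_mulr.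
have xnV : (x ^+ n)^-1 = x ^+ n.
  by apply/eqP; rewrite eq_invg_mul -expgD addnn -x2n.
rewrite inE -defG groupX ?mem_gen ?inE ?cycle_id //=.
rewrite -sub_cent1 join_subG !cycle_subG.
apply/andP; split; apply/cent1P; first exact: commuteX.
by apply/commute_sym/commgP/conjg_fixP; rewrite conjXg xy expVgn xnV.
Qed.

Lemma conjg_fix_commute {gT : finGroupType} (x y : gT) : x ^ y = x <-> commute x y.
Proof. by split=> [/conjg_fixP/commgP | /commgP/conjg_fixP]. Qed.

Section AbelianIndexTwo.

Variables (gT : finGroupType) (E V : {group gT}).
Hypotheses (sVE : V \subset E) (iVE : #|E : V| = 2).

(* Every square of E lies in V, since E :\: V is the single coset V :* t. *)
Lemma index2_square_mem t : t \in E -> t ^+ 2 \in V.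
Proof.
move=> Et; have [Vt | nVt] := boolP (t \in V); first by rewrite groupX.
apply: contraR (nVt) => nVt2.
have : t ^+ 2 \in V :* t.
  by rewrite (rcoset_index2 sVE iVE) !inE ?nVt2 ?nVt ?groupX ?Et.
by rewrite mem_rcoset expgS expg1 mulgK.
Qed.

Hypothesis abV : abelian V.

(* V is maximal in E, and the centraliser of z \in V contains V, so it is
   either V itself or all of E. *)
Lemma index2_centraliser {z : gT} : z \in V -> 'C_E[z] \subset V \/ z \in 'Z(E).
Proof.
move=> Vz; have maxV : maximal V E by apply: p_index_maximal; rewrite ?iVE.
have sVC : V \subset 'C_E[z] by rewrite subsetI sVE sub_cent1 (subsetP abV).
have [ltCE | ] := boolP ('C_E[z] \proper E).
  by left; rewrite ((maxgroupP maxV).2 'C_E[z]%G ltCE sVC).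
rewrite properE subsetIl /= => /negPn sEC; right.
by rewrite inE (subsetP sVE) // -sub_cent1 (subset_trans sEC) ?subsetIr.
Qed.

Variable z : gT.
Hypotheses (oV : #|V| = 4) (Vz : z \in V) (oz : #[z] = 2).

(* For t \in E not centralising z, with t ^+ 2 != 1: the centraliser C_V(t)
   is a proper subgroup of V, hence of order at most 2, and it contains both
   t ^+ 2 and z * z ^ t; these two nontrivial elements are therefore equal. *)
Lemma index2_square_twisted t :
  t \in E -> t \notin 'C[z] -> t ^+ 2 != 1 -> t ^+ 2 = z * z ^ t.
Proof.
move=> Et nCt t2_neq1.
have Nt : t \in 'N(V) by rewrite (subsetP (normal_norm (index2_normal sVE iVE))).
have Vt2 := index2_square_mem t Et.
have zV : z^-1 = z by rewrite invg_expg oz.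
have cVV a b : a \in V -> b \in V -> commute a b by move=> Va Vb; apply: (centsP abV).
pose C := 'C_V[t].
have Ct2 : t ^+ 2 \in C by rewrite inE Vt2 groupX ?cent1id.
have Czw : z * z ^ t \in C.
  rewrite inE groupM ?memJ_norm //=; apply/cent1P/conjg_fix_commute.
  rewrite conjMg -conjgM -[t * t]/(t ^+ 2).
  by rewrite ((conjg_fix_commute z (t ^+ 2)).2 (cVV _ _ Vz Vt2)) cVV ?memJ_norm.
have leC2 : #|C| <= 2.
  have ltCV : #|C| < 4.
    rewrite -oV proper_card // properE subsetIl; apply/subsetPn; exists z => //.
    by rewrite inE Vz cent1C.
  have : #|C| %| 4 by rewrite -oV cardSg ?subsetIl.
  by case: #|C| ltCV => [|[|[|[|]]]].
have zw_neq1 : z * z ^ t != 1.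
  apply: contra nCt => /eqP zw1; apply/cent1P/commute_sym/conjg_fix_commute.
  by rewrite -(mulKg z (z ^ t)) zw1 mulg1 zV.
have defC : C = [set 1; z * z ^ t].
  apply/eqP; rewrite eq_sym eqEcard subUset !sub1set group1 Czw cards2.
  by rewrite eq_sym zw_neq1.
by move: Ct2; rewrite defC !inE (negPf t2_neq1) => /eqP.
Qed.

(* If no element outside V centralises z, then E :\: V contains an
   involution: for any t \in E :\: V, either t itself or t * z. *)
Lemma index2_involution_outside :
  'C_E[z] \subset V -> exists2 u, u \in E :\: V & #[u] = 2.
Proof.
move=> sCV; have /subsetPn[t Et nVt] : ~~ (E \subset V) by rewrite -indexg_eq1 iVE.
have t_neq1 : t != 1 by apply: contraNneq nVt => ->.
have [t2_1 | t2_neq1] := eqVneq (t ^+ 2) 1.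
  by exists t; rewrite ?inE ?nVt ?Et ?(nt_prime_order _ t2_1).
have nCt : t \notin 'C[z].
  by apply: contra nVt => Ct; apply: (subsetP sCV); rewrite inE Et.
have tz2 : (t * z) ^+ 2 = 1.
  have z2 : z * z = 1 by rewrite -[z * z]/(z ^+ 2) -oz expg_order.
  rewrite expgS expg1 mulgA -(mulgA t z t) (conjgC z t) (mulgA t t).
  rewrite -[t * t]/(t ^+ 2) (index2_square_twisted t Et nCt t2_neq1).
  by rewrite -(mulgA z) -conjMg z2 conj1g mulg1 z2.
have nVtz : t * z \notin V by rewrite groupMr.
exists (t * z); first by rewrite inE nVtz groupM // (subsetP sVE).
by apply: (nt_prime_order _ tz2) => //; apply: contraNneq nVtz => ->.
Qed.

End AbelianIndexTwo.

Arguments index2_centraliser {gT E V} sVE iVE abV {z}.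
Arguments index2_involution_outside {gT E V} sVE iVE abV {z}.

(* Two non-commuting involutions of a group of order 8 generate it, and the
   group they generate is dihedral. *)
Lemma dihedral8_of_involutions {gT : finGroupType} {E : {group gT}} {u z : gT} :
    #|E| = 8 -> u \in E -> z \in E -> #[u] = 2 -> #[z] = 2 -> u \notin 'C[z] ->
  E \isog 'D_8.
Proof.
move=> oE Eu Ez ou oz nCuz.
have u_neq_z : u != z by apply: contraNneq nCuz => ->; apply: cent1id.
set G := <<[set u; z]>>.
have isoG : G \isog 'D_#|G| := involutions_gen_dihedral ou oz u_neq_z.
have sGE : G \subset E by rewrite gen_subG subUset !sub1set Eu Ez.
have nabG : ~~ abelian G.
  have [Gu Gz] : u \in G /\ z \in G by rewrite !mem_gen // !inE eqxx ?orbT.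
  by apply: contra nCuz => /centsP cGG; apply/cent1P; apply: cGG.
have oG : #|G| = 8.
  have pG : 2.-group G by apply: pgroupS sGE _; rewrite /pgroup oE.
  have : #|G| %| 8 by rewrite -oE cardSg.
  move: nabG; have := p2group_abelian pG.
  by case: #|G| => [|[|[|[|[|[|[|[|[|]]]]]]]]] //= ->.
have -> : E = G :> {set gT} by apply/eqP; rewrite eq_sym eqEcard sGE oG oE.
by move: isoG; rewrite oG.
Qed.

Theorem mainTheorem6 (gT : finGroupType) (Gx Ge Gxy : {group gT}) :
  amalgam Gx Ge Gxy ->
  primitive_amalgam Gx Ge Gxy ->
  #|Gx : Gxy| = 5%N ->
  #|Ge : Gxy| = 2%N ->
  estab1 Gx Ge Gxy = 1 ->
  Gx \isog 'D_20 ->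
  Ge \isog 'D_8.
Proof.
move=> amal prim iX iE _ isoX.
have sVX : Gxy \subset Gx by rewrite -amal subsetIl.
have sVE : Gxy \subset Ge by rewrite -amal subsetIr.
have oV : #|Gxy| = 4.
  by move: (Lagrange sVX); rewrite (card_isog isoX) (@card_dihedral 10) // iX; lia.
have oE : #|Ge| = 8 by rewrite -(Lagrange sVE) oV iE.
have abV : abelian Gxy by apply: (@card_p2group_abelian _ 2).
have [z Zz oz] := dihedral_central_involution (isT : 0 < 5) isoX.
have nZX : <[z]> <| Gx by rewrite sub_center_normal ?cycle_subG.
(* <z> is a normal 2-subgroup of G_x, so it lies in the Sylow subgroup G_xy. *)
have Vz : z \in Gxy.
  have hallV : 2.-Hall(Gx) Gxy by rewrite /pHall sVX /pgroup oV iX.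
  rewrite -cycle_subG; apply: normal_sub_max_pgroup (Hall_max hallV) _ nZX.
  by rewrite /pgroup /= -orderE oz.
(* By primitivity <z> is not normal in G_e, so C_Ge(z) = G_xy. *)
have sCV : 'C_Ge[z] \subset Gxy.
  have [// | ZEz] := index2_centraliser sVE iE abV Vz.
  have := prim <[z]>%G; rewrite cycle_subG Vz => /(_ isT nZX).
  rewrite sub_center_normal ?cycle_subG // => /(_ isT) z1.
  by move: oz; rewrite orderE z1 cards1.
have [u /setDP[Eu nVu] ou] := index2_involution_outside sVE iE abV oV Vz oz sCV.
have nCuz : u \notin 'C[z].
  by apply: contra nVu => Cu; apply: (subsetP sCV); rewrite inE Eu.
exact: dihedral8_of_involutions oE Eu (subsetP sVE z Vz) ou oz nCuz.
Qed.
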